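(* Let $\Gamma$ be a Deza graph with parameters $(n,k,k-1,a)$, $k>1$, $\beta=1$. Let $x,y$ be $NA$-vertices with $C(x)\ne C(y)$. Then: (1) if some vertex of $\{x,x_b\}$ is adjacent to some vertex of $\{y,y_b\}$, or some vertex of $\{x',x_b'\}$ is adjacent to some vertex of $\{y',y_b'\}$, then all possible edges between $\{x,x_b\}$ and $\{y,y_b\}$ are present and all possible edges between $\{x',x_b'\}$ and $\{y',y_b'\}$ are present; (2) if some vertex of $\{x,x_b\}$ is adjacent to some vertex of $\{y',y_b'\}$, or some vertex of $\{x',x_b'\}$ is adjacent to some vertex of $\{y,y_b\}$, then all possible edges between $\{x,x_b\}$ and $\{y',y_b'\}$ are present and all possible edges between $\{x',x_b'\}$ and $\{y,y_b\}$ are present; (3) the number of edges between $C(x)$ and $C(y)$ is $0$, $8$ or $16$.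
   Context: A Deza graph with parameters $(n,k,b,a)$, $a\le b$, is a $k$-regular graph on $n$ vertices in which any two distinct vertices have $a$ or $b$ common neighbours; $\beta$ is the number of vertices $u\ne v$ with exactly $b$ common neighbours with a given vertex $v$. Since $\beta=1$, for each vertex $x$ let $x_b$ denote the unique vertex having $b=k-1$ common neighbours with $x$. A vertex $x$ is an $A$-vertex if $x$ is adjacent to $x_b$, and an $NA$-vertex otherwise. For an $NA$-vertex $x$, $x'$ denotes the unique neighbour of $x$ not adjacent to $x_b$, $x_b'=(x')_b=(x_b)'$, and $C(x)=\{x,x',x_b,x_b'\}$. *)

From mathcomp Require Import all_boot.
Set Implicit Arguments. Unset Strict Implicit. Unset Printing Implicit Defensive.

Section Deza.
Variables (T : finType) (e : rel T).

Definition simple_graph := symmetric e /\ irreflexive e.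

Definition nbhd (x : T) : {set T} := [set y | e x y].
Definition cn (x y : T) : nat := #|nbhd x :&: nbhd y|.

Definition deza_graph (n k b a : nat) :=
  [/\ simple_graph, #|T| = n, (forall x, #|nbhd x| = k), a <= b &
      forall x y, x != y -> cn x y = a \/ cn x y = b].

Definition beta_at (b : nat) (v : T) : nat := #|[set u | (u != v) && (cn v u == b)]|.

(* x_b : the (unique, when beta = 1) vertex having b common neighbours with x *)
Definition vb (b : nat) (x : T) : T :=
  odflt x [pick u | (u != x) && (cn x u == b)].

Definition A_vertex (b : nat) (x : T) : bool := e x (vb b x).
Definition NA_vertex (b : nat) (x : T) : bool := ~~ e x (vb b x).

(* x' : the unique neighbour of x not adjacent to x_b *)
Definition vprime (b : nat) (x : T) : T :=
  odflt x [pick y | e x y && ~~ e (vb b x) y].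

Definition vbprime (b : nat) (x : T) : T := vprime b (vb b x).

Definition Cset (b : nat) (x : T) : {set T} :=
  [set x; vprime b x; vb b x; vbprime b x].

Definition all_edges (A B : {set T}) : Prop := forall u v, u \in A -> v \in B -> e u v.
Definition some_edge (A B : {set T}) : Prop := exists u v, [/\ u \in A, v \in B & e u v].

Definition n_edges (A B : {set T}) : nat :=
  #|[set p : T * T | [&& p.1 \in A, p.2 \in B & e p.1 p.2]]|.
End Deza.

From mathcomp Require Import all_boot.
Set Implicit Arguments. Unset Strict Implicit. Unset Printing Implicit Defensive.

(* Since beta = 1, x |-> x_b is a fixed-point-free involution and N(x) minus
   N(x_b) is the single vertex x'.  Comparing cn(u,t) = cn(u_b,t) = a for t
   outside {u, u_b} shows that u' and u_b' have the same neighbours there;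
   hence (u')_b = (u_b)', the map ' is an involution as well, and a vertex t is
   adjacent to z_b iff it is adjacent to z, unless t' is z or z_b.  The
   involution b then pairs off the common neighbours of t and w other than t'
   and w', so cn(t,w) = [t' ~ w] + [w' ~ t] mod 2 for t <> w.  For an NA-vertex x this
   makes a = cn(x,x') even, and then x' ~ y iff x ~ y' whenever y lies outside
   C(x).  Hence the edges between C(x) and C(y) form four 2x2 blocks, each
   complete or empty, where the blocks {x,x_b}x{y,y_b} and {x',x_b'}x{y',y_b'}
   agree, and so do the two mixed blocks. *)

Lemma even_card_closed (T : finType) (s : T -> T) (J : {set T}) :
  involutive s -> (forall z, s z != z) -> {in J, forall z, s z \in J} ->
  ~~ odd #|J|.
Proof.
move=> sK s_nfix sJ.
pose J1 := [set z in J | enum_rank z < enum_rank (s z)].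
have rank_neq z : enum_rank (s z) != enum_rank z.
  by rewrite (inj_eq enum_rank_inj) s_nfix.
have J1J : J1 \subset J by apply/subsetP => z; rewrite inE => /andP[].
have DJ1 : J :\: J1 = s @: J1.
  apply/setP => z; rewrite !inE; apply/andP/imsetP => [[zNJ1 zJ]|[w]].
    exists (s z); last by rewrite sK.
    rewrite zJ /= -leqNgt in zNJ1.
    by rewrite /J1 inE sJ // sK ltn_neqAle rank_neq zNJ1.
  by rewrite /J1 inE => /andP[wJ lt_w] ->; rewrite sJ // sK ltnNge (ltnW lt_w).
have := cardsID J1 J; rewrite (setIidPr J1J) DJ1 card_imset; last exact: inv_inj.
by move=> <-; rewrite addnn odd_double.
Qed.

Section EdgeCount.
Variables (T : finType) (e : rel T).

Lemma n_edges_const (A B : {set T}) (c : bool) :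
  {in A & B, forall u t, e u t = c} -> n_edges e A B = c * (#|A| * #|B|).
Proof.
move=> eAB; rewrite /n_edges; case: c eAB => eAB.
  by rewrite mul1n -cardsX; apply: eq_card => -[u t]; rewrite !inE /=;
    case uA: (u \in A); case tB: (t \in B); rewrite //= eAB.
apply/eqP; rewrite mul0n cards_eq0; apply/eqP/setP => -[u t]; rewrite !inE /=.
by case uA: (u \in A); case tB: (t \in B); rewrite //= eAB.
Qed.

Lemma n_edges_setUl (A1 A2 B : {set T}) : [disjoint A1 & A2] ->
  n_edges e (A1 :|: A2) B = n_edges e A1 B + n_edges e A2 B.
Proof.
move=> dA; rewrite /n_edges.
pose S (A : {set T}) := [set p : T * T | [&& p.1 \in A, p.2 \in B & e p.1 p.2]].
change (#|S (A1 :|: A2)| = #|S A1| + #|S A2|).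
have -> : S (A1 :|: A2) = S A1 :|: S A2.
  by apply/setP => -[u t]; rewrite !inE /= andb_orl.
rewrite cardsU (_ : S A1 :&: S A2 = set0) ?cards0 ?subn0 //.
apply/setP => -[u t]; rewrite !inE /=.
by case uA1: (u \in A1); rewrite //= (disjointFr dA uA1) !andbF.
Qed.

Lemma n_edges_setUr (A B1 B2 : {set T}) : [disjoint B1 & B2] ->
  n_edges e A (B1 :|: B2) = n_edges e A B1 + n_edges e A B2.
Proof.
move=> dB; rewrite /n_edges.
pose S (B : {set T}) := [set p : T * T | [&& p.1 \in A, p.2 \in B & e p.1 p.2]].
change (#|S (B1 :|: B2)| = #|S B1| + #|S B2|).
have -> : S (B1 :|: B2) = S B1 :|: S B2.
  by apply/setP => -[u t]; rewrite !inE /=; case: (u \in A); rewrite //= andb_orl.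
rewrite cardsU (_ : S B1 :&: S B2 = set0) ?cards0 ?subn0 //.
apply/setP => -[u t]; rewrite !inE /=.
by case tB1: (t \in B1); rewrite ?andbF //= (disjointFr dB tB1) !andbF.
Qed.

Lemma all_edges_of_const_blocks (A B A' B' : {set T}) (c : bool) :
    {in A & B, forall u t, e u t = c} -> {in A' & B', forall u t, e u t = c} ->
  some_edge e A B \/ some_edge e A' B' -> all_edges e A B /\ all_edges e A' B'.
Proof.
move=> eAB eAB' some_AB; have {some_AB} c_true : c.
  case: some_AB => -[u [t [uA tB]]]; first by rewrite eAB.
  by rewrite eAB'.
by split=> u t uA tB; [rewrite eAB | rewrite eAB'].
Qed.

End EdgeCount.

Section DezaBetaOne.
Variables (T : finType) (e : rel T) (n k a : nat).
Hypotheses (deza : deza_graph e n k k.-1 a) (k_gt1 : 1 < k)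
           (beta1 : forall v, beta_at e k.-1 v = 1).

Local Notation N := (nbhd e).
Local Notation vb := (vb e k.-1).
Local Notation vp := (vprime e k.-1).
Local Notation C := (Cset e k.-1).
Local Notation NA := (NA_vertex e k.-1).

Lemma adjC : symmetric e.
Proof. by case: deza => -[]. Qed.

Lemma adj_irr : irreflexive e.
Proof. by case: deza => -[]. Qed.

Lemma card_nbhd u : #|N u| = k.
Proof. by case: deza. Qed.

Lemma cnC u t : cn e u t = cn e t u.
Proof. by rewrite /cn setIC. Qed.

Lemma vb_spec u : [set t | (t != u) && (cn e u t == k.-1)] = [set vb u].
Proof.
have [z Hz] : exists z, [set t | (t != u) && (cn e u t == k.-1)] = [set z].
  by apply/cards1P; rewrite -(beta1 u).
have zP t : (t != u) && (cn e u t == k.-1) = (t == z).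
  by rewrite -[t == z]in_set1 -Hz inE.
rewrite Hz /vb; case: pickP => [t | none]; first by rewrite zP => /eqP->.
by have := none z; rewrite zP eqxx.
Qed.

Lemma vbP u t : (t != u) && (cn e u t == k.-1) = (t == vb u).
Proof. by have /setP/(_ t) := vb_spec u; rewrite !inE. Qed.

Lemma vb_neq u : vb u != u.
Proof. by have := vbP u (vb u); rewrite eqxx => /andP[]. Qed.

Lemma cn_vb u : cn e u (vb u) = k.-1.
Proof. by have := vbP u (vb u); rewrite eqxx => /andP[_ /eqP]. Qed.

Lemma vbK : involutive vb.
Proof.
by move=> u; apply/eqP; rewrite eq_sym -vbP eq_sym vb_neq cnC cn_vb eqxx.
Qed.

Lemma cn_other u t : t != u -> t != vb u -> cn e u t = a.
Proof.
move=> tu tvb; case: deza => _ _ _ _ /(_ u t); rewrite eq_sym tu => /(_ isT) [//|cn_b].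
by move: tvb; rewrite -vbP tu cn_b eqxx.
Qed.

Lemma vprime_spec u : N u :\: N (vb u) = [set vp u].
Proof.
have [z Hz] : exists z, N u :\: N (vb u) = [set z].
  apply/cards1P; have := cardsID (N (vb u)) (N u); rewrite card_nbhd.
  have := cn_vb u; rewrite /cn => -> /eqP.
  by rewrite -[X in _ == X](prednK (ltnW k_gt1)) -addn1 eqn_add2l.
have zP t : e u t && ~~ e (vb u) t = (t == z).
  by rewrite -[t == z]in_set1 -Hz !inE andbC.
rewrite Hz /vprime; case: pickP => [t | none]; first by rewrite zP => /eqP->.
by have := none z; rewrite zP eqxx.
Qed.

Lemma vprimeP u t : e u t && ~~ e (vb u) t = (t == vp u).
Proof. by have /setP/(_ t) := vprime_spec u; rewrite !inE andbC. Qed.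

Lemma adj_vprime u : e u (vp u).
Proof. by have := vprimeP u (vp u); rewrite eqxx => /andP[]. Qed.

Lemma nadj_vb_vprime u : ~~ e (vb u) (vp u).
Proof. by have := vprimeP u (vp u); rewrite eqxx => /andP[]. Qed.

Lemma nadj_vprime_vb u : ~~ e u (vp (vb u)).
Proof. by have := nadj_vb_vprime (vb u); rewrite vbK. Qed.

Lemma vprime_neq u : vp u != u.
Proof. by apply: contraTneq (adj_vprime u) => ->; rewrite adj_irr. Qed.

Lemma cn_split u t : cn e u t = #|N u :&: N (vb u) :&: N t| + e t (vp u).
Proof.
rewrite /cn (cardsD1 (vp u)) !inE adj_vprime addnC; congr (_ + _).
apply: eq_card => z; rewrite !inE -vprimeP.
by case: (e u z); rewrite //= negbK.
Qed.

(* [cn e u t] and [cn e (vb u) t] both equal [a], and by [cn_split] they differ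
   only in the last summand. *)
Lemma adj_vprime_vb u t : t != u -> t != vb u -> e t (vp u) = e t (vp (vb u)).
Proof.
move=> tu tvb; have : cn e u t = cn e (vb u) t by rewrite !cn_other ?vbK.
rewrite !cn_split vbK (setIC (N (vb u))) => /eqP; rewrite eqn_add2l.
by case: (e t (vp u)); case: (e t (vp (vb u))).
Qed.

(* [vp u] and [vp (vb u)] share all neighbours of [vp u] but [u], i.e. k-1 of them. *)
Lemma vb_vprime u : vb (vp u) = vp (vb u).
Proof.
have common : N (vp u) :&: N (vp (vb u)) = N (vp u) :\ u.
  apply/setP => z; rewrite !inE.
  have [->|zu] := eqVneq z u.
    by rewrite [e (vp (vb u)) u]adjC (negbTE (nadj_vprime_vb u)) andbF.
  have [->|zvb] := eqVneq z (vb u).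
    by rewrite [e (vp u) (vb u)]adjC (negbTE (nadj_vb_vprime u)).
  by rewrite ![e (vp _) z]adjC -adj_vprime_vb // andbb.
apply/esym/eqP; rewrite -vbP; apply/andP; split.
  by apply: contraNneq (nadj_vb_vprime u) => <-; apply: adj_vprime.
rewrite /cn common; apply/eqP/succn_inj; rewrite prednK ?(ltnW k_gt1) //.
by rewrite -[in RHS](card_nbhd (vp u)) (cardsD1 u (N (vp u))) inE adjC adj_vprime.
Qed.

Lemma vprimeK : involutive vp.
Proof.
move=> u; apply/eqP; rewrite eq_sym -vprimeP adjC adj_vprime vb_vprime adjC.
exact: nadj_vprime_vb.
Qed.

Lemma vprime_inj : injective vp.
Proof. exact: inv_inj vprimeK. Qed.

Lemma adj_vb t z : vp t != z -> vp t != vb z -> e t (vb z) = e t z.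
Proof.
rewrite !(inv_eq vprimeK) -vb_vprime => tz tvbz.
by have := adj_vprime_vb tz tvbz; rewrite vprimeK vb_vprime vprimeK.
Qed.

Lemma adj_vb_nbhd t z : e t z -> z != vp t -> e t (vb z) && (vb z != vp t).
Proof.
move=> tz zt; have vbz : vb z != vp t.
  apply: contraNneq (nadj_vprime_vb t) => vbzE.
  by rewrite -vb_vprime -vbzE vbK.
by rewrite vbz adj_vb ?tz // eq_sym.
Qed.

(* [vb] pairs off the common neighbours of [t] and [t'] other than [vp t], [vp t']. *)
Lemma odd_cn t t' : t != t' -> odd (cn e t t') = e t' (vp t) (+) e t (vp t').
Proof.
move=> tt'; have vp_neq : vp t' != vp t by rewrite (inj_eq vprime_inj) eq_sym.
set X := N t :&: N t'.
have even_rest : ~~ odd #|X :\ vp t :\ vp t'|.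
  apply: (even_card_closed vbK vb_neq) => z; rewrite !inE => /and4P[zt' zt tz t'z].
  by have /andP[-> ->] := adj_vb_nbhd tz zt; have /andP[-> ->] := adj_vb_nbhd t'z zt'.
rewrite /cn -/X (cardsD1 (vp t)) (cardsD1 (vp t') (X :\ vp t)) !inE vp_neq.
by rewrite !adj_vprime /= andbT !oddD (negbTE even_rest) !oddb addbF.
Qed.

Lemma vprime_neq_vb x : NA x -> vp x != vb x.
Proof. by apply: contraNneq => <-; apply: adj_vprime. Qed.

Lemma even_a x : NA x -> ~~ odd a.
Proof.
move=> NAx; rewrite -(cn_other (vprime_neq x) (vprime_neq_vb NAx)).
by rewrite odd_cn 1?eq_sym ?vprime_neq // adj_irr vprimeK adj_irr.
Qed.

Lemma adj_vprime_sym v w : ~~ odd a -> w != v -> w != vb v ->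
  e w (vp v) = e v (vp w).
Proof.
move=> a_even wv wvb; move: a_even; rewrite -(cn_other wv wvb) odd_cn 1?eq_sym //.
by case: (e w (vp v)); case: (e v (vp w)).
Qed.

Lemma Cset_vb v : C (vb v) = C v.
Proof.
apply/setP => z; rewrite !inE /vbprime vbK.
by apply/idP/idP; rewrite -?orbA => /or4P[]/eqP->; rewrite !eqxx ?orbT.
Qed.

Lemma Cset_vprime v : C (vp v) = C v.
Proof.
apply/setP => z; rewrite !inE /vbprime vprimeK vb_vprime vprimeK.
by apply/idP/idP; rewrite -?orbA => /or4P[]/eqP->; rewrite !eqxx ?orbT.
Qed.

Lemma Cset_id v : v \in C v.
Proof. by rewrite !inE eqxx. Qed.

Lemma vprime_Cset v : vp v \in C v.
Proof. by rewrite !inE eqxx orbT. Qed.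

Lemma Cset_eq v w : w \in C v -> C w = C v.
Proof. by rewrite !inE -?orbA => /or4P[] /eqP->; rewrite ?Cset_vprime ?Cset_vb. Qed.

Lemma Cset_sym v w : (w \in C v) = (v \in C w).
Proof. by apply/idP/idP => /Cset_eq CE; rewrite CE Cset_id. Qed.

Lemma adj_vb_out v w : w \notin C v -> e v (vb w) = e v w.
Proof.
move=> wC; apply: adj_vb; apply: contraNneq wC.
  by move=> <-; rewrite !inE eqxx orbT.
by move=> vpE; rewrite -(vbK w) -vpE vb_vprime !inE eqxx !orbT.
Qed.

Lemma adj_pair v w : w \notin C v ->
  {in [set v; vb v] & [set w; vb w], forall u t, e u t = e v w}.
Proof.
move=> wC; have vC : v \notin C w by rewrite -Cset_sym.
have adj_vb_l : e (vb v) w = e v w by rewrite adjC adj_vb_out // adjC.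
move=> u t; rewrite !inE => /orP[]/eqP-> /orP[]/eqP->; rewrite ?adj_vb_out //.
by rewrite Cset_vb.
Qed.

Lemma Cset_out x y p q : C x != C y -> p \in C x -> q \in C y -> q \notin C p.
Proof.
move=> Cxy /Cset_eq Cp /Cset_eq Cq; apply: contra Cxy => /Cset_eq.
by rewrite Cp Cq => ->.
Qed.

Lemma adj_vprime_l x y : ~~ odd a -> y \notin C x -> e (vp x) y = e x (vp y).
Proof.
move=> a_even yC; rewrite adjC adj_vprime_sym //; apply: contraNneq yC => ->.
  exact: Cset_id.
by rewrite !inE eqxx orbT.
Qed.

Lemma adj_vprime_vprime x y : ~~ odd a -> y \notin C x -> e (vp x) (vp y) = e x y.
Proof.
move=> a_even yC; rewrite adj_vprime_l ?vprimeK //.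
by rewrite Cset_sym Cset_vprime -Cset_sym.
Qed.

Lemma Cset_pairs v : C v = [set v; vb v] :|: [set vp v; vb (vp v)].
Proof.
apply/setP => z; rewrite !inE /vbprime vb_vprime.
by apply/idP/idP; rewrite -?orbA => /or4P[]/eqP->; rewrite !eqxx ?orbT.
Qed.

Lemma disjoint_Cset_pairs v : NA v ->
  [disjoint [set v; vb v] & [set vp v; vb (vp v)]].
Proof.
move=> NAv; have n1 : v != vp v by rewrite eq_sym vprime_neq.
have n2 : v != vp (vb v) by rewrite -(inv_eq vprimeK) vprime_neq_vb.
have n3 : vb v != vp v by rewrite eq_sym vprime_neq_vb.
have n4 : vb v != vp (vb v) by rewrite eq_sym vprime_neq.
rewrite disjoints_subset vb_vprime; apply/subsetP => z; rewrite !inE.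
by case/orP=> /eqP->; rewrite negb_or ?n1 ?n2 ?n3 ?n4.
Qed.

Lemma Cset_block x y p q : C x != C y -> p \in C x -> q \in C y ->
  {in [set p; vb p] & [set q; vb q], forall u t, e u t = e p q}.
Proof. by move=> Cxy pC qC; apply/adj_pair/(Cset_out Cxy pC qC). Qed.

Lemma card_pair v : #|[set v; vb v]| = 2.
Proof. by rewrite cards2 eq_sym vb_neq. Qed.

Lemma n_edges_Cset x y : NA x -> NA y -> C x != C y ->
  n_edges e (C x) (C y) = 8 * (e x y + e x (vp y)).
Proof.
move=> NAx NAy Cxy; have a_even := even_a NAx.
have block p q : p \in C x -> q \in C y ->
    n_edges e [set p; vb p] [set q; vb q] = 4 * e p q.
  move=> pC qC; rewrite (n_edges_const (Cset_block Cxy pC qC)).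
  by rewrite !card_pair mulnC.
have yCx : y \notin C x by apply: Cset_out (Cset_id x) (Cset_id y).
rewrite !Cset_pairs n_edges_setUl ?disjoint_Cset_pairs //.
rewrite !(@n_edges_setUr _ _ _ [set y; vb y]) ?disjoint_Cset_pairs //.
rewrite !block ?Cset_id ?vprime_Cset // adj_vprime_l // adj_vprime_vprime //.
by case: (e x y); case: (e x (vp y)).
Qed.

End DezaBetaOne.

Theorem lemma17 (T : finType) (e : rel T) (n k a : nat) (x y : T) :
  deza_graph e n k k.-1 a -> 1 < k ->
  (forall v, beta_at e k.-1 v = 1) ->
  NA_vertex e k.-1 x -> NA_vertex e k.-1 y ->
  Cset e k.-1 x != Cset e k.-1 y ->
  let xb := vb e k.-1 x in let yb := vb e k.-1 y in
  let x' := vprime e k.-1 x in let y' := vprime e k.-1 y in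
  let xb' := vbprime e k.-1 x in let yb' := vbprime e k.-1 y in
  [/\ (some_edge e [set x; xb] [set y; yb] \/ some_edge e [set x'; xb'] [set y'; yb']) ->
        all_edges e [set x; xb] [set y; yb] /\ all_edges e [set x'; xb'] [set y'; yb'],
      (some_edge e [set x; xb] [set y'; yb'] \/ some_edge e [set x'; xb'] [set y; yb]) ->
        all_edges e [set x; xb] [set y'; yb'] /\ all_edges e [set x'; xb'] [set y; yb] &
      n_edges e (Cset e k.-1 x) (Cset e k.-1 y) \in [:: 0; 8; 16]].
Proof.
move=> deza k_gt1 beta1 NAx NAy Cxy /=.
have a_even := even_a deza k_gt1 beta1 NAx.
have block := Cset_block deza k_gt1 beta1 Cxy.
have [x_C y_C] := (Cset_id e k x, Cset_id e k y).
have [x'_C y'_C] := (vprime_Cset e k x, vprime_Cset e k y).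
have yCx := Cset_out deza k_gt1 beta1 Cxy x_C y_C.
rewrite /vbprime -!(vb_vprime deza k_gt1 beta1); split.
- apply: all_edges_of_const_blocks (block _ _ x_C y_C) _.
  by rewrite -(adj_vprime_vprime deza k_gt1 beta1 a_even yCx); apply: block.
- apply: all_edges_of_const_blocks (block _ _ x_C y'_C) _.
  by rewrite -(adj_vprime_l deza k_gt1 beta1 a_even yCx); apply: block.
- rewrite (n_edges_Cset deza k_gt1 beta1 NAx NAy Cxy).
  by case: (e x _); case: (e x _).
Qed.
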